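(* The functor $\tau\colon \Delta_{\mathbb{F}}^1\to\Omega$ preserves the surjective-injective and active-inert factorization systems.
   Context: $\Delta_{\mathbb{F}}^1$ is the full subcategory of Barwick's category $\Delta_{\mathbb{F}}$ (objects $([n], f\colon[n]\to\mathbb{F})$, $\mathbb{F}$ finite sets; morphisms $(\phi,\eta)$ with $\phi$ in $\Delta$, $\eta\colon f\to g\circ\phi$ with injective components and pullback naturality squares) on objects with $f(n)=\mathbf{1}$. A map $(\phi,\eta)$ is injective if $\phi$ is injective; surjective if $\phi$ is surjective and all $\eta_i$ are bijections; inert if $\phi$ is the inclusion of a subinterval; active if $\phi$ preserves endpoints and all $\eta_i$ are bijections. $\Omega$ is the dendroidal category (trees as polynomial endofunctors, per Kock), where inert maps are embeddings of subtrees and active maps send leaves bijectively to leaves and root to root. $\tau$ sends $([n],f)$ to the tree with edges $\coprod_{i=0}^n f(i)$ and vertices $\coprod_{i=1}^n f(i)$, the edge $x\in f(i)$ ($i<n$) entering the vertex $f^{i(i+1)}(x)$, and is determined on morphisms by the edge map given on $f(i)$ by $\eta_i\colon f(i)\to g(\phi(i))$. *)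

From mathcomp Require Import all_boot.
Set Implicit Arguments.
Unset Strict Implicit.
Unset Printing Implicit Defensive.

(* The category Delta_F^1 (Barwick), with the category F of finite sets     *)
(* taken skeletally: the finite set f(i) is {0, ..., dsz i - 1}.            *)
(* An object ([n], f : [n] -> F) is given by n, the sizes of the f(i), and  *)
(* the structure maps f^{i(i+1)} : f(i) -> f(i+1) (i < n); the general      *)

Record dobj := DObj {
  dn : nat;
  dsz : nat -> nat;                     (* |f(i)|, relevant for i <= dn *)
  dmap : nat -> nat -> nat;
  dmap_ok : forall i x, i < dn -> x < dsz i -> dmap i x < dsz i.+1;
  dsz_top : dsz dn = 1
}.

Fixpoint fsteps (X : dobj) (i k x : nat) : nat :=
  match k with
  | 0 => x
  | k'.+1 => dmap X (i + k') (fsteps X i k' x)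
  end.

Definition fij (X : dobj) (i j x : nat) : nat := fsteps X i (j - i) x.

(* A morphism (phi, eta) : ([n], f) -> ([m], g) of Delta_F:                 *)
(* phi : [n] -> [m] in Delta, eta : f -> g o phi natural, with injective    *)
(* components, and all naturality squares pullbacks.                       *)
Record dmor (X Y : dobj) := DMor {
  phi : nat -> nat;
  eta : nat -> nat -> nat;
  phi_range : forall i, i <= dn X -> phi i <= dn Y;
  phi_mono : forall i j, i <= j -> j <= dn X -> phi i <= phi j;
  eta_range : forall i x, i <= dn X -> x < dsz X i -> eta i x < dsz Y (phi i);
  eta_inj : forall i x x', i <= dn X -> x < dsz X i -> x' < dsz X i ->
              eta i x = eta i x' -> x = x';
  eta_nat : forall i j x, i <= j -> j <= dn X -> x < dsz X i ->
              eta j (fij X i j x) = fij Y (phi i) (phi j) (eta i x);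
  (* pullback: the comparison map f(i) -> f(j) x_{g(phi j)} g(phi i) is     *)
  (* injective (by eta_inj) and surjective: *)
  eta_pb : forall i j y z, i <= j -> j <= dn X ->
              y < dsz Y (phi i) -> z < dsz X j ->
              fij Y (phi i) (phi j) y = eta j z ->
              exists2 x, x < dsz X i & eta i x = y /\ fij X i j x = z
}.

Section DClasses.
Variables (X Y : dobj) (m : dmor X Y).

Definition eta_bij : Prop :=
  forall i y, i <= dn X -> y < dsz Y (phi m i) ->
    exists2 x, x < dsz X i & eta m i x = y.

Definition d_injective : Prop :=
  forall i j, i <= dn X -> j <= dn X -> phi m i = phi m j -> i = j.

Definition d_surjective : Prop :=
  (forall k, k <= dn Y -> exists2 i, i <= dn X & phi m i = k) /\ eta_bij.

(* phi is the inclusion of a subinterval *)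
Definition d_inert : Prop :=
  exists k, forall i, i <= dn X -> phi m i = i + k.

Definition d_active : Prop :=
  phi m 0 = 0 /\ phi m (dn X) = dn Y /\ eta_bij.
End DClasses.

(* Trees (Kock): a polynomial endofunctor  A <-s- M -p-> N -t-> A  with s   *)
(* and t injective.  Encoded by the edge set A = tE, the vertex set N = tV, *)
(* t = tout, and M (= s(M), the edges which are inputs of a vertex) with p  *)
(* via tin : tE -> option tV (tin e = Some v iff e is an input of v).       *)

Record tree := Tree {
  tE : Type;
  tV : Type;
  tout : tV -> tE;
  tin : tE -> option tV
}.

Definition is_root (T : tree) (e : tE T) : Prop := tin e = None.
Definition is_leaf (T : tree) (e : tE T) : Prop := forall v, tout v <> e.

Section OmegaClasses.
Variables (T T' : tree) (f : tE T -> tE T').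

Definition om_injective : Prop := injective f.
Definition om_surjective : Prop := forall e', exists e, f e = e'.

Definition om_active : Prop :=
  (forall e, is_root e -> is_root (f e)) /\
  (forall e, is_leaf e -> is_leaf (f e)) /\
  (forall e1 e2, is_leaf e1 -> is_leaf e2 -> f e1 = f e2 -> e1 = e2) /\
  (forall e', is_leaf e' -> exists2 e, is_leaf e & f e = e').

(* embedding of a subtree (Kock's tree embedding): f extends to a map of    *)
(* polynomial endofunctors whose middle square is cartesian.               *)
Definition om_inert : Prop :=
  exists g : tV T -> tV T',
    (forall v, tout (g v) = f (tout v)) /\
    (forall e v, tin e = Some v -> tin (f e) = Some (g v)) /\
    (forall v e', tin e' = Some (g v) ->
        exists2 e, tin e = Some v & f e = e') /\
    (forall v e1 e2, tin e1 = Some v -> tin e2 = Some v -> f e1 = f e2 -> e1 = e2).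
End OmegaClasses.

Definition tauE (X : dobj) : Type := {i : 'I_(dn X).+1 & 'I_(dsz X i)}.
(* vertices: coprod_{i=1}^n f(i); the vertex (i, x) here (i < n) is x in f(i+1) *)
Definition tauV (X : dobj) : Type := {i : 'I_(dn X) & 'I_(dsz X i.+1)}.

Definition tau_out (X : dobj) (v : tauV X) : tauE X :=
  let: existT i x := v in
  existT (fun j : 'I_(dn X).+1 => 'I_(dsz X j)) (@Ordinal (dn X).+1 i.+1 (ltn_ord i)) x.

Definition tau_in (X : dobj) (e : tauE X) : option (tauV X) :=
  let: existT i x := e in
  (if (i < dn X) as b return ((i < dn X) = b -> option (tauV X))
   then fun h => Some (existT (fun j : 'I_(dn X) => 'I_(dsz X j.+1)) (Ordinal h)
                        (Ordinal (dmap_ok h (ltn_ord x))))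
   else fun _ => None) (erefl _).

Definition tau (X : dobj) : tree := Tree (@tau_out X) (@tau_in X).

Definition tau_mor (X Y : dobj) (m : dmor X Y) : tE (tau X) -> tE (tau Y) :=
  fun e => let: existT i x := e in
  existT (fun j : 'I_(dn Y).+1 => 'I_(dsz Y j))
    (@Ordinal (dn Y).+1 (phi m i) (phi_range m (ltn_ord i)))
    (Ordinal (eta_range m (ltn_ord i) (ltn_ord x))).

From mathcomp Require Import all_boot.
Set Implicit Arguments.
Unset Strict Implicit.
Unset Printing Implicit Defensive.

(* Everything reduces to
   the components of [eta]: their injectivity gives injectivity of [tau m] on
   each level, a bijective [eta] (with [phi] onto, resp. endpoint preserving)
   gives surjectivity (resp. the leaf and root conditions), and for a
   subinterval inclusion [phi i = i + k] the vertex [x in f(i+1)] goes to the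
   vertex [eta_(i+1) x]; naturality of [eta] makes this compatible with the
   input relation, and the pullback squares make the middle square cartesian. *)

Lemma dep_ifT A (b : bool) (F : b = true -> A) (G : b = false -> A) (h : b = true) :
  (if b as b' return (b = b' -> A) then F else G) (erefl b) = F h.
Proof. by case: b F G h => F G h //=; rewrite (eq_irrelevance h (erefl true)). Qed.

Lemma dep_ifF A (b : bool) (F : b = true -> A) (G : b = false -> A) (h : b = false) :
  (if b as b' return (b = b' -> A) then F else G) (erefl b) = G h.
Proof. by case: b F G h => F G h //=; rewrite (eq_irrelevance h (erefl false)). Qed.

Section TauCoordinates.
Variable X : dobj.

Definition lvl (e : tauE X) : nat := val (projT1 e).
Definition idx (e : tauE X) : nat := val (projT2 e).
Definition vlvl (v : tauV X) : nat := val (projT1 v).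
Definition vidx (v : tauV X) : nat := val (projT2 v).

Definition tau_edge i x (hi : i <= dn X) (hx : x < dsz X i) : tauE X :=
  existT (fun j : 'I_(dn X).+1 => 'I_(dsz X j)) (Ordinal (hi : i < (dn X).+1))
    (Ordinal hx).

Definition tau_vertex i x (hi : i < dn X) (hx : x < dsz X i.+1) : tauV X :=
  existT (fun j : 'I_(dn X) => 'I_(dsz X j.+1)) (Ordinal hi) (Ordinal hx).

Lemma lvl_le e : lvl e <= dn X. Proof. exact: ltn_ord (projT1 e). Qed.
Lemma idx_lt e : idx e < dsz X (lvl e). Proof. exact: ltn_ord (projT2 e). Qed.
Lemma vlvl_lt v : vlvl v < dn X. Proof. exact: ltn_ord (projT1 v). Qed.
Lemma vidx_lt v : vidx v < dsz X (vlvl v).+1. Proof. exact: ltn_ord (projT2 v). Qed.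

Lemma tauE_eq e1 e2 : lvl e1 = lvl e2 -> idx e1 = idx e2 -> e1 = e2.
Proof.
case: e1 e2 => [[a ha] [x hx]] [[b hb] [y hy]]; rewrite /lvl /idx /= => eab exy.
subst b y; by rewrite (bool_irrelevance hb ha) (bool_irrelevance hy hx).
Qed.

Lemma tauV_eq v1 v2 : vlvl v1 = vlvl v2 -> vidx v1 = vidx v2 -> v1 = v2.
Proof.
case: v1 v2 => [[a ha] [x hx]] [[b hb] [y hy]]; rewrite /vlvl /vidx /= => eab exy.
subst b y; by rewrite (bool_irrelevance hb ha) (bool_irrelevance hy hx).
Qed.

Lemma lvl_out v : lvl (tau_out v) = (vlvl v).+1. Proof. by case: v. Qed.
Lemma idx_out v : idx (tau_out v) = vidx v. Proof. by case: v. Qed.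

Lemma tau_in_Some e v :
  tau_in e = Some v <-> vlvl v = lvl e /\ vidx v = dmap X (lvl e) (idx e).
Proof.
case: e => i x; rewrite /tau_in /lvl /idx /=; split.
  have /orP[h|/negbTE h] := orbN (i < dn X).
    by rewrite (dep_ifT _ _ h) => -[<-].
  by rewrite (dep_ifF _ _ h).
move=> [el ei]; have h : i < dn X by rewrite -el vlvl_lt.
by rewrite (dep_ifT _ _ h); congr Some; apply: tauV_eq.
Qed.

Lemma tau_in_None e : tau_in e = None <-> ~~ (lvl e < dn X).
Proof.
case: e => i x; rewrite /tau_in /lvl /=.
have /orP[h|/negbTE h] := orbN (i < dn X).
  by rewrite (dep_ifT _ _ h) h.
by rewrite (dep_ifF _ _ h) h.
Qed.

Lemma tau_in_lvl e v : tau_in e = Some v -> lvl e < dn X.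
Proof. by move=> /tau_in_Some[<- _]; apply: vlvl_lt. Qed.

Lemma is_leaf_tau e : is_leaf (T := tau X) e <-> lvl e = 0.
Proof.
split=> [|e0 v ve]; last by move: (f_equal lvl ve); rewrite lvl_out e0.
case: e => [[[|j] hj] x] leaf //; case: (leaf (tau_vertex (hj : j < dn X) (ltn_ord x))).
exact: tauE_eq.
Qed.

Lemma is_root_tau e : is_root (T := tau X) e <-> lvl e = dn X.
Proof.
rewrite /is_root /=; split=> [/tau_in_None|el]; last by apply/tau_in_None; rewrite el ltnn.
by rewrite -leqNgt => le; apply/eqP; rewrite eqn_leq lvl_le.
Qed.

End TauCoordinates.

Lemma fij_succ X i x : fij X i i.+1 x = dmap X i x.
Proof. by rewrite /fij subSnn /= addn0. Qed.

Section TauMorphism.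
Variables (X Y : dobj) (m : dmor X Y).

Lemma lvl_mor e : lvl (tau_mor m e) = phi m (lvl e). Proof. by case: e. Qed.
Lemma idx_mor e : idx (tau_mor m e) = eta m (lvl e) (idx e). Proof. by case: e. Qed.

Lemma tau_mor_inj_lvl e1 e2 :
  lvl e1 = lvl e2 -> tau_mor m e1 = tau_mor m e2 -> e1 = e2.
Proof.
move=> el /(f_equal (@idx Y)); rewrite !idx_mor el => ei.
apply: tauE_eq => //; have := idx_lt e1; rewrite el => lt1.
exact: eta_inj (lvl_le e2) lt1 (idx_lt e2) ei.
Qed.

Lemma tau_mor_edge i x (hi : i <= dn X) (hx : x < dsz X i) e' :
  lvl e' = phi m i -> eta m i x = idx e' -> tau_mor m (tau_edge hi hx) = e'.
Proof. by move=> el ex; apply: tauE_eq; rewrite ?lvl_mor ?idx_mor. Qed.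

Lemma tau_mor_hit_bij i e' (hi : i <= dn X) :
  eta_bij m -> lvl e' = phi m i -> exists2 e, lvl e = i & tau_mor m e = e'.
Proof.
move=> bij el; have [|x hx ex] := bij i (idx e') hi; first by rewrite -el idx_lt.
by exists (tau_edge hi hx); last exact: tau_mor_edge.
Qed.

Lemma tau_mor_surjective : d_surjective m -> om_surjective (tau_mor m).
Proof.
move=> [onto bij] e'; have [i hi el] := onto _ (lvl_le e').
by have [e _ <-] := tau_mor_hit_bij hi bij (esym el); exists e.
Qed.

Lemma tau_mor_injective : d_injective m -> om_injective (tau_mor m).
Proof.
move=> inj e1 e2 E; apply: tau_mor_inj_lvl (E).
by apply: inj (lvl_le _) (lvl_le _) _; rewrite -!lvl_mor E.
Qed.

Lemma tau_mor_active : d_active m -> om_active (tau_mor m).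
Proof.
move=> [phi0 [phin bij]]; split; [|split; [|split]].
- by move=> e /is_root_tau el; apply/is_root_tau; rewrite lvl_mor el.
- by move=> e /is_leaf_tau el; apply/is_leaf_tau; rewrite lvl_mor el.
- move=> e1 e2 /is_leaf_tau l1 /is_leaf_tau l2.
  by apply: tau_mor_inj_lvl; rewrite l1 l2.
- move=> e' /is_leaf_tau el.
  have [e le0 <-] := tau_mor_hit_bij (leq0n _) bij (etrans el (esym phi0)).
  by exists e => //; apply/is_leaf_tau.
Qed.

Lemma tau_mor_in_inj v e1 e2 :
  tau_in e1 = Some v -> tau_in e2 = Some v -> tau_mor m e1 = tau_mor m e2 -> e1 = e2.
Proof.
move=> /tau_in_Some[l1 _] /tau_in_Some[l2 _].
by apply: tau_mor_inj_lvl; rewrite -l1 -l2.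
Qed.

Section Inert.
Variable k : nat.
Hypothesis phi_shift : forall i, i <= dn X -> phi m i = i + k.

Let phi_succ_lt (v : tauV X) : vlvl v + k < dn Y.
Proof. by rewrite -addSn -phi_shift ?vlvl_lt // phi_range ?vlvl_lt. Qed.

Let eta_succ_lt (v : tauV X) : eta m (vlvl v).+1 (vidx v) < dsz Y (vlvl v + k).+1.
Proof. by rewrite -addSn -phi_shift ?vlvl_lt // eta_range ?vlvl_lt ?vidx_lt. Qed.

Definition tau_vmor (v : tauV X) : tauV Y := tau_vertex (phi_succ_lt v) (eta_succ_lt v).

Lemma vlvl_vmor v : vlvl (tau_vmor v) = vlvl v + k. Proof. by []. Qed.
Lemma vidx_vmor v : vidx (tau_vmor v) = eta m (vlvl v).+1 (vidx v). Proof. by []. Qed.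

Lemma phi_shift_succ i : i < dn X -> phi m i.+1 = (phi m i).+1.
Proof. by move=> lt; rewrite !phi_shift ?addSn // ltnW. Qed.

Lemma tau_mor_in e v :
  tau_in e = Some v -> tau_in (tau_mor m e) = Some (tau_vmor v).
Proof.
move=> ev; have lt := tau_in_lvl ev; move: ev => /tau_in_Some[vl vi].
have nat_sq : eta m (lvl e).+1 (dmap X (lvl e) (idx e)) =
              dmap Y (phi m (lvl e)) (eta m (lvl e) (idx e)).
  have := eta_nat m (leqnSn _) lt (idx_lt e).
  by rewrite phi_shift_succ // !fij_succ.
(* giving [Y] explicitly avoids a very slow unification through [tau_mor] *)
apply/(@tau_in_Some Y); rewrite lvl_mor idx_mor vlvl_vmor vidx_vmor vl vi.
by rewrite nat_sq phi_shift // ltnW.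
Qed.

Lemma tau_mor_in_cartesian v e' :
  tau_in e' = Some (tau_vmor v) -> exists2 e, tau_in e = Some v & tau_mor m e = e'.
Proof.
move=> /tau_in_Some[]; rewrite vlvl_vmor vidx_vmor => el ei; set i := vlvl v in el ei.
have hi : i <= dn X := ltnW (vlvl_lt v).
have e'l : lvl e' = phi m i by rewrite phi_shift.
have hy : idx e' < dsz Y (phi m i) by rewrite -e'l idx_lt.
have hf : fij Y (phi m i) (phi m i.+1) (idx e') = eta m i.+1 (vidx v).
  by rewrite phi_shift_succ ?vlvl_lt // fij_succ -e'l -ei.
have [x hx [ex fx]] := eta_pb (leqnSn _) (vlvl_lt v) hy (vidx_lt v) hf.
exists (tau_edge hi hx); last exact: tau_mor_edge.
by apply/tau_in_Some; rewrite /= -fij_succ.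
Qed.

Lemma tau_vmor_out v : tau_out (tau_vmor v) = tau_mor m (tau_out v).
Proof.
apply: tauE_eq; last by rewrite idx_mor !idx_out lvl_out.
by rewrite lvl_mor !lvl_out vlvl_vmor phi_shift ?addSn ?vlvl_lt.
Qed.

End Inert.

Lemma tau_mor_inert : d_inert m -> om_inert (tau_mor m).
Proof.
move=> [k shift]; exists (tau_vmor shift); split; [|split; [|split]].
- exact: tau_vmor_out.
- exact: tau_mor_in.
- exact: tau_mor_in_cartesian.
- exact: tau_mor_in_inj.
Qed.

End TauMorphism.

Theorem lemma4p4 (X Y : dobj) (m : dmor X Y) :
  (d_surjective m -> om_surjective (tau_mor m)) /\
  (d_injective m -> om_injective (tau_mor m)) /\
  (d_active m -> om_active (tau_mor m)) /\
  (d_inert m -> om_inert (tau_mor m)).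
Proof.
split; first exact: tau_mor_surjective.
split; first exact: tau_mor_injective.
split; first exact: tau_mor_active.
exact: tau_mor_inert.
Qed.
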